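(* Let $H$ be a real Hilbert space with inner product $(\cdot,\cdot)_H$ and norm $\|\cdot\|_H$, let $\Phi\in H$, and let $\mathbf{L}(\Phi)=\mathbf{M}(\Phi)+\mathbf{S}(\Phi)$, where $\mathbf{S}(\Phi)$ is a skew-symmetric linear operator on $H$ and $-\mathbf{M}(\Phi)$ is a symmetric positive definite linear operator on $H$. Assume there are positive constants $\alpha_{\mathbf{M}},\beta_{\mathbf{S}}$ such that for all $\Psi_1,\Psi_2,\Psi\in H$, $$(\mathbf{S}(\Phi)\Psi_1,\Psi_2)_H\le\beta_{\mathbf{S}}\|\Psi_1\|_H\|\Psi_2\|_H,\qquad(-\mathbf{M}(\Phi)\Psi,\Psi)_H\ge\alpha_{\mathbf{M}}\|\Psi\|_H^2.$$ Then for all $\Psi_1,\Psi_2\in H$, $$(\mathbf{L}(\Phi)\Psi_1,\Psi_2)_H\le\Big(1+\tfrac{\beta_{\mathbf{S}}}{\alpha_{\mathbf{M}}}\Big)(\Psi_1,-\mathbf{M}(\Phi)\Psi_1)_H^{1/2}(\Psi_2,-\mathbf{M}(\Phi)\Psi_2)_H^{1/2}.$$ *)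

From HB Require Import structures.
From mathcomp Require Import all_boot all_order all_algebra.
From mathcomp Require Import all_classical all_reals all_analysis.
Set Implicit Arguments. Unset Strict Implicit. Unset Printing Implicit Defensive.
Import Order.TTheory GRing.Theory Num.Theory.
Import numFieldNormedType.Exports.
Local Open Scope ring_scope.

(* [ip] is an inner product on the real normed space [H] inducing its norm:
   symmetric, linear in the first argument, and (x,x) = |x|^2.
   Together with completeness of [H] this makes H a real Hilbert space. *)
Definition is_inner_product (R : realType) (H : normedModType R)
  (ip : H -> H -> R) : Prop :=
  [/\ (forall x y, ip x y = ip y x),
      (forall (a : R) (x y z : H), ip (a *: x + y) z = a * ip x z + ip y z)
    & (forall x, ip x x = `|x| ^+ 2)].

Definition is_linear_op (R : realType) (H : normedModType R) (T : H -> H) : Prop :=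
  forall (a : R) (x y : H), T (a *: x + y) = a *: T x + T y.

(* The form (Psi1, Psi2) |-> (-M(Phi) Psi1, Psi2) is symmetric, bilinear and
   nonnegative, so Cauchy-Schwarz bounds the M-part of (L(Phi) Psi1, Psi2) by
   the product of the energy norms (Psi, -M(Phi) Psi)^(1/2). Coercivity gives
   alpha |Psi1| |Psi2| <= that same product, so the S-part, bounded by
   beta |Psi1| |Psi2|, is at most beta/alpha times it. *)

From HB Require Import structures.
From mathcomp Require Import all_boot all_order all_algebra.
From mathcomp Require Import all_classical all_reals all_analysis.
From mathcomp Require Import ring lra.
Import Order.TTheory GRing.Theory Num.Theory.
Import numFieldNormedType.Exports.
Local Open Scope ring_scope.

Section SemidefiniteForm.
Variables (R : rcfType) (V : lmodType R) (b : V -> V -> R).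
Hypothesis form_sym : forall x y, b x y = b y x.
Hypothesis form_linearl : forall a x y z, b (a *: x + y) z = a * b x z + b y z.
Hypothesis form_ge0 : forall x, 0 <= b x x.

Lemma form0l z : b 0 z = 0.
Proof.
have := form_linearl 1 0 0 z; rewrite scale1r addr0 mul1r => h.
by apply: (addrI (b 0 z)); rewrite addr0 -h.
Qed.

Lemma formZl a x z : b (a *: x) z = a * b x z.
Proof. by have := form_linearl a x 0 z; rewrite !addr0 form0l addr0. Qed.

Lemma formDl x y z : b (x + y) z = b x z + b y z.
Proof. by have := form_linearl 1 x y z; rewrite scale1r mul1r. Qed.

Lemma form_sqr_combination u v x y :
  b (u *: x + v *: y) (u *: x + v *: y) =
  u ^+ 2 * b x x + 2 * u * v * b x y + v ^+ 2 * b y y.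
Proof.
rewrite !formDl !formZl ![b _ (u *: x + v *: y)]form_sym !formDl !formZl.
by rewrite [b y x]form_sym; ring.
Qed.

(* On an isotropic [x], [b (u x + y)] is affine in [u], hence negative for
   some [u] unless [b x y <= 0]. *)
Lemma form_isotropic_le0 x y : b x x = 0 -> b x y <= 0.
Proof.
move=> bxx0; rewrite leNgt; apply/negP => bxy_gt0.
pose u := - (b y y + 1) / (2 * b x y).
have := form_ge0 (u *: x + 1 *: y).
rewrite form_sqr_combination bxx0 mulr0 add0r expr1n mul1r mulr1.
have -> : 2 * u * b x y = - (b y y + 1) by rewrite /u; field; rewrite gt_eqF.
lra.
Qed.

Lemma form_cauchy_schwarz_le x y :
  b x y <= Num.sqrt (b x x) * Num.sqrt (b y y).
Proof.
set s1 := Num.sqrt (b x x); set s2 := Num.sqrt (b y y).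
have s1sq : s1 ^+ 2 = b x x by rewrite sqr_sqrtr.
have s2sq : s2 ^+ 2 = b y y by rewrite sqr_sqrtr.
have [s12_0|s12_gt0] := eqVneq (s1 * s2) 0.
  rewrite s12_0; move: s12_0 => /eqP; rewrite mulf_eq0 => /orP[] /eqP s0.
    by apply: form_isotropic_le0; rewrite -s1sq s0 expr0n.
  by rewrite form_sym; apply: form_isotropic_le0; rewrite -s2sq s0 expr0n.
have s12_pos : 0 < s1 * s2 by rewrite lt_def s12_gt0 mulr_ge0 ?sqrtr_ge0.
have := form_ge0 (s2 *: x + (- s1) *: y).
rewrite form_sqr_combination -s1sq -s2sq.
have -> : s2 ^+ 2 * s1 ^+ 2 + 2 * s2 * - s1 * b x y + (- s1) ^+ 2 * s2 ^+ 2 =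
          2 * (s1 * s2) * (s1 * s2 - b x y) by ring.
by rewrite (pmulr_rge0 _ (mulr_gt0 _ s12_pos)) // subr_ge0.
Qed.

Lemma form_cauchy_schwarz x y :
  `|b x y| <= Num.sqrt (b x x) * Num.sqrt (b y y).
Proof.
have := form_cauchy_schwarz_le ((-1) *: x) y.
rewrite !formZl [b x (_ *: _)]form_sym formZl !mulN1r opprK => h.
by rewrite ler_norml lerNl h form_cauchy_schwarz_le.
Qed.

End SemidefiniteForm.

Lemma ler_mul_sqrt (R : rcfType) (k a b p q : R) :
  0 <= k -> 0 <= a -> 0 <= b -> k * a ^+ 2 <= p -> k * b ^+ 2 <= q ->
  k * a * b <= Num.sqrt p * Num.sqrt q.
Proof.
move=> k_ge0 a_ge0 b_ge0 kap kbq.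
have -> : k * a * b = Num.sqrt (k * a ^+ 2) * Num.sqrt (k * b ^+ 2).
  rewrite !(sqrtrM _ k_ge0) !sqrtr_sqr !ger0_norm // mulrACA -expr2.
  by rewrite sqr_sqrtr // mulrA.
by rewrite ler_pM ?sqrtr_ge0 ?ler_wsqrtr.
Qed.

Lemma symmetric_op_cauchy_schwarz {R : realType} {H : normedModType R}
    {ip : H -> H -> R} {T : H -> H} :
  is_inner_product ip -> is_linear_op T ->
  (forall x y, ip (T x) y = ip x (T y)) -> (forall x, 0 <= ip (T x) x) ->
  forall x y, `|ip (T x) y| <= Num.sqrt (ip (T x) x) * Num.sqrt (ip (T y) y).
Proof.
move=> [ip_sym ip_linearl _] T_lin T_sym T_ge0.
apply: form_cauchy_schwarz => // [x y|a x y z]; first by rewrite T_sym ip_sym.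
by rewrite T_lin ip_linearl.
Qed.

Theorem lemma3p7 (R : realType) (H : completeNormedModType R)
  (ip : H -> H -> R) (Hip : is_inner_product ip)
  (M S : H -> H -> H) (Phi : H) (alphaM betaS : R)
  (HMlin : is_linear_op (M Phi)) (HSlin : is_linear_op (S Phi))
  (HSskew : forall x y : H, ip (S Phi x) y = - ip x (S Phi y))
  (HMsym : forall x y : H, ip (- M Phi x) y = ip x (- M Phi y))
  (HMpd : forall x : H, x != 0 -> 0 < ip (- M Phi x) x)
  (Halpha : 0 < alphaM) (Hbeta : 0 < betaS)
  (HSbound : forall x1 x2 : H, ip (S Phi x1) x2 <= betaS * `|x1| * `|x2|)
  (HMcoer : forall x : H, ip (- M Phi x) x >= alphaM * `|x| ^+ 2) :
  forall x1 x2 : H,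
    ip (M Phi x1 + S Phi x1) x2 <=
      (1 + betaS / alphaM) * Num.sqrt (ip x1 (- M Phi x1))
                           * Num.sqrt (ip x2 (- M Phi x2)).
Proof.
move=> x1 x2; have [_ ip_linearl _] := Hip.
have negM_lin : is_linear_op (fun x => - M Phi x).
  by move=> a x y; rewrite HMlin opprD scalerN.
have negM_ge0 x : 0 <= ip (- M Phi x) x.
  by apply: le_trans (HMcoer x); rewrite mulr_ge0 ?sqr_ge0 ?ltW.
have split_L : ip (M Phi x1 + S Phi x1) x2 =
               - ip (- M Phi x1) x2 + ip (S Phi x1) x2.
  by rewrite -{1}[M Phi x1]opprK -scaleN1r ip_linearl mulN1r.
rewrite -!HMsym split_L.
set s1 := Num.sqrt _; set s2 := Num.sqrt _.
have cauchy_schwarz : - ip (- M Phi x1) x2 <= s1 * s2.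
  have := symmetric_op_cauchy_schwarz Hip negM_lin HMsym negM_ge0 x1 x2.
  by apply: le_trans; rewrite -normrN ler_norm.
have energy_norm_ge : alphaM * `|x1| * `|x2| <= s1 * s2.
  exact: ler_mul_sqrt (ltW Halpha) (normr_ge0 _) (normr_ge0 _)
                      (HMcoer x1) (HMcoer x2).
have S_le : ip (S Phi x1) x2 <= betaS / alphaM * (s1 * s2).
  apply: le_trans (HSbound x1 x2) _.
  have -> : betaS * `|x1| * `|x2| = betaS / alphaM * (alphaM * `|x1| * `|x2|).
    by field; rewrite gt_eqF.
  by rewrite ler_pM2l ?divr_gt0.
rewrite -mulrA mulrDl mul1r; lra.
Qed.
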